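(* Let $G_1, G_2$ be two graphs on the same vertex set $V$. Let $A \subseteq S(G_2)$ and $B \subseteq V$ be such that $N_{G_1}(B) \cup N_{G_2}(B) \subseteq A$. Suppose $E(G_1) \triangle E(G_2) \subseteq \binom{A \cup B}{2}$. Then $S(G_1) \setminus B \subseteq S(G_2) \setminus B$.
   Context: For a graph $G$ and $X\subseteq V(G)$, $N_G(X)=\{x\in V(G)\setminus X: xy\in E(G)\text{ for some }y\in X\}$ and $N_G(x)=N_G(\{x\})$. The strong $4$-core $S(G)$ is the maximal set $X\subseteq V(G)$ such that $|N_G(x)\cap X|\ge 4$ for every $x\in X\cup N_G(X)$ (well-defined since the union of two such sets is again such a set). $\triangle$ denotes symmetric difference. *)

From mathcomp Require Import all_boot.
Set Implicit Arguments. Unset Strict Implicit. Unset Printing Implicit Defensive.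

Definition simple_graph (T : finType) (G : rel T) : Prop :=
  symmetric G /\ irreflexive G.

Definition nbhs (T : finType) (G : rel T) (X : {set T}) : {set T} :=
  [set x | (x \notin X) && [exists y in X, G x y]].

Definition nbh (T : finType) (G : rel T) (x : T) : {set T} := nbhs G [set x].

Definition strong4 (T : finType) (G : rel T) (X : {set T}) : bool :=
  [forall x in X :|: nbhs G X, 4 <= #|nbh G x :&: X|].

(* The strong 4-core: the maximal such set, i.e. the union of all of them
   (this union is itself such a set, as noted in the paper). *)
Definition strong4core (T : finType) (G : rel T) : {set T} :=
  \bigcup_(X : {set T} | strong4 G X) X.

From mathcomp Require Import all_boot.

(* Put X := S(G1) \ B.  The set X ∪ S(G2) is strong in G2: a vertex of its
   closed G2-neighbourhood that is not already served by S(G2) lies outside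
   A ∪ B (a vertex of B seen from X \ B would have a G2-neighbour in
   N(B) ⊆ A ⊆ S(G2)), so G1 and G2 agree around it, and its at least four
   G1-neighbours in S(G1) avoid B (otherwise it would lie in N(B) ⊆ A), hence
   lie in X.  Maximality of S(G2) then gives X ⊆ S(G2). *)

Set Implicit Arguments.
Unset Strict Implicit.
Unset Printing Implicit Defensive.

Section Neighbourhoods.

Variables (T : finType) (G : rel T).

Lemma in_nbh x z : (z \in nbh G x) = (z != x) && G z x.
Proof.
rewrite /nbh /nbhs inE in_set1; congr (_ && _).
apply/existsP/idP => [[w /andP[/set1P -> //]] | Gzx].
by exists x; rewrite set11.
Qed.

Lemma nbhsP (X : {set T}) x :
  reflect (x \notin X /\ exists2 y, y \in X & G x y) (x \in nbhs G X).
Proof. by rewrite inE; apply: (iffP andP) => -[-> /exists_inP]. Qed.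

Lemma adj_mem_setU_nbhs (X : {set T}) x y : y \in X -> G x y -> x \in X :|: nbhs G X.
Proof.
move=> yX Gxy; rewrite inE; case: (boolP (x \in X)) => //= xX.
by apply/nbhsP; split; last exists y.
Qed.

Lemma nbhs_sub_edge (X A : {set T}) x y :
  nbhs G X \subset A -> x \notin X -> y \in X -> G x y -> x \in A.
Proof. by move=> /subsetP sXA xX yX Gxy; apply/sXA/nbhsP; split; last exists y. Qed.

Lemma mem_setU_nbhsU (P Q : {set T}) x :
  x \in (P :|: Q) :|: nbhs G (P :|: Q) -> x \notin Q :|: nbhs G Q ->
  x \in P :|: nbhs G P.
Proof.
rewrite [x \in (P :|: Q) :|: _]inE => /orP[|/nbhsP[xPQ [y yPQ Gxy]]] xQ.
  by rewrite !inE in xQ *; case/orP: xQ => ->; rewrite ?orbT.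
move: yPQ; rewrite inE => /orP[yP|yQ]; first exact: adj_mem_setU_nbhs Gxy.
by rewrite (adj_mem_setU_nbhs yQ Gxy) in xQ.
Qed.

Lemma leq_card_nbhI x (X Y : {set T}) :
  X \subset Y -> #|nbh G x :&: X| <= #|nbh G x :&: Y|.
Proof. by move=> sXY; apply/subset_leq_card/setIS. Qed.

Lemma strong4P (X : {set T}) :
  reflect (forall x, x \in X :|: nbhs G X -> 4 <= #|nbh G x :&: X|) (strong4 G X).
Proof. exact: (iffP forall_inP). Qed.

Lemma strong4U (X Y : {set T}) : strong4 G X -> strong4 G Y -> strong4 G (X :|: Y).
Proof.
move=> /strong4P sX /strong4P sY; apply/strong4P => x xXY.
have [xX | xX] := boolP (x \in X :|: nbhs G X).
  exact: leq_trans (sX x xX) (leq_card_nbhI x (subsetUl X Y)).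
rewrite [X :|: Y]setUC in xXY; have xY := mem_setU_nbhsU xXY xX.
exact: leq_trans (sY x xY) (leq_card_nbhI x (subsetUr X Y)).
Qed.

Lemma strong4_core : strong4 G (strong4core G).
Proof.
apply: (big_ind (strong4 G)) => //; last exact: strong4U.
by apply/strong4P => x; rewrite set0U => /nbhsP[_ [y /[!inE]]].
Qed.

Lemma strong4_sub_core (X : {set T}) : strong4 G X -> X \subset strong4core G.
Proof. by move=> sX; apply: (bigcup_sup X). Qed.

End Neighbourhoods.

Section Perturbation.

Variables (T : finType) (G1 G2 : rel T) (A B : {set T}).
Hypotheses (G1_sym : symmetric G1) (G2_sym : symmetric G2).
Hypothesis nbhsB_sub : nbhs G1 B :|: nbhs G2 B \subset A.
Hypothesis diff_in_AB :
  forall x y, G1 x y != G2 x y -> (x \in A :|: B) && (y \in A :|: B).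

Let nbhs1B_sub : nbhs G1 B \subset A.
Proof. by case/subUsetP: nbhsB_sub. Qed.

Let nbhs2B_sub : nbhs G2 B \subset A.
Proof. by case/subUsetP: nbhsB_sub. Qed.

Lemma edge_agree_l x y : x \notin A :|: B -> G1 x y = G2 x y.
Proof. by move=> xAB; apply/eqP; apply: contraNT xAB => /diff_in_AB /andP[]. Qed.

Lemma edge_agree_r x y : y \notin A :|: B -> G1 x y = G2 x y.
Proof. by move=> yAB; apply/eqP; apply: contraNT yAB => /diff_in_AB /andP[]. Qed.

Lemma nbh_agree x : x \notin A :|: B -> nbh G1 x = nbh G2 x.
Proof. by move=> xAB; apply/setP => z; rewrite !in_nbh edge_agree_r. Qed.

Lemma nbhI_sub_setD (X : {set T}) x :
  x \notin A :|: B -> nbh G1 x :&: X \subset nbh G2 x :&: (X :\: B).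
Proof.
move=> xAB; rewrite -nbh_agree //; apply/subsetP => z /setIP[zx zX].
rewrite in_setI zx in_setD zX andbT /=; apply: contraNN xAB => zB.
move: zx; rewrite in_nbh G1_sym => /andP[_ G1xz]; rewrite inE.
by case: (boolP (x \in B)) => [|xB]; rewrite ?orbT ?(nbhs_sub_edge nbhs1B_sub xB zB G1xz).
Qed.

Variable S : {set T}.
Hypothesis A_sub : A \subset S.

Lemma notin_B_of_nbhs (X : {set T}) x :
  x \in (X :\: B) :|: nbhs G2 (X :\: B) -> x \notin S :|: nbhs G2 S -> x \notin B.
Proof.
move=> xXB xS; apply/negP => xB.
move: xXB; rewrite [x \in _ :|: _]inE in_setD xB /=.
move=> /nbhsP[_ [z /setDP[_ zB] G2xz]].
have zS : z \in S.
  by apply/(subsetP A_sub)/(nbhs_sub_edge nbhs2B_sub zB xB); rewrite G2_sym.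
by rewrite (adj_mem_setU_nbhs zS G2xz) in xS.
Qed.

Lemma strong4_patch (X : {set T}) :
  strong4 G1 X -> strong4 G2 S -> strong4 G2 ((X :\: B) :|: S).
Proof.
move=> /strong4P sX /strong4P sS; apply/strong4P => x xY.
have [xS | xS] := boolP (x \in S :|: nbhs G2 S).
  exact: leq_trans (sS x xS) (leq_card_nbhI G2 x (subsetUr _ _)).
have xXB := mem_setU_nbhsU xY xS.
have xA : x \notin A.
  by apply: contraNN xS => /(subsetP A_sub) xS; rewrite inE xS.
have xAB : x \notin A :|: B by rewrite inE negb_or xA (notin_B_of_nbhs xXB xS).
have xX : x \in X :|: nbhs G1 X.
  move: xXB; rewrite [x \in _ :|: _]inE => /orP[/setDP[xX _]|/nbhsP[_ [z]]].
    by rewrite inE xX.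
  by move=> /setDP[zX _]; rewrite -edge_agree_l //; apply: adj_mem_setU_nbhs.
apply: leq_trans (sX x xX) (leq_trans (subset_leq_card (nbhI_sub_setD X xAB)) _).
exact/leq_card_nbhI/subsetUl.
Qed.

End Perturbation.

Theorem lemma4p4 (T : finType) (G1 G2 : rel T) (A B : {set T}) :
  simple_graph G1 -> simple_graph G2 ->
  A \subset strong4core G2 ->
  nbhs G1 B :|: nbhs G2 B \subset A ->
  (forall x y : T, G1 x y != G2 x y -> (x \in A :|: B) && (y \in A :|: B)) ->
  strong4core G1 :\: B \subset strong4core G2 :\: B.
Proof.
move=> [G1_sym _] [G2_sym _] A_sub nbhsB_sub diff_in_AB.
have patch := strong4_patch G1_sym G2_sym nbhsB_sub diff_in_AB A_sub
  (strong4_core G1) (strong4_core G2).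
have sub_core := strong4_sub_core patch.
apply/subsetP => x /setDP[xX xB]; rewrite in_setD xB /=.
by apply: (subsetP sub_core); rewrite !inE xB xX.
Qed.
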